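(* Let $X$ be a transient random walk on $\mathbf{Z}^d$ and $U(A):=\sum_{x\in A\cap\mathbf{Z}^d}g(0,x)$. Then $$\gamma_c=\limsup_{n\to\infty}n^{-1}\log_2U(\mathcal{V}_n),$$ where $\gamma_c:=\inf\{\gamma\in(0,d):\sum_{x\in\mathbf{Z}^d\setminus\{0\}}g(0,x)\|x\|^{-\gamma}<\infty\}$ with $\inf\varnothing:=d$.
   Context: A random walk on $\mathbf{Z}^d$ is $X_n=X_0+\xi_1+\cdots+\xi_n$ with $\xi_1,\xi_2,\dots$ i.i.d. $\mathbf{Z}^d$-valued; $P^a$ denotes its law when $X_0=a$. Its Green function is $g(a,x):=\sum_{n\ge0}P^a\{X_n=x\}$, and transience means $g$ is finite. For $k\ge0$, $\mathcal{V}_k:=[-2^k,2^k)^d$. $\|\cdot\|$ is the Euclidean norm. *)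

From Stdlib Require Import Reals Lra ZArith List Classical ClassicalEpsilon.
Open Scope R_scope.

(* Points of Z^d are lists of integers of length d. *)
Definition pt (d : nat) (x : list Z) : Prop := length x = d.
Definition zero (d : nat) : list Z := repeat 0%Z d.
Definition zsub (x y : list Z) : list Z :=
  map (fun p => (fst p - snd p)%Z) (combine x y).
Definition enorm (x : list Z) : R :=
  sqrt (fold_right (fun z acc => IZR z * IZR z + acc) 0 x).

(* Sums of nonnegative families over (countable) sets: supremum of finite sums. *)
Definition finsum {T : Type} (f : T -> R) (l : list T) : R :=
  fold_right (fun x acc => f x + acc) 0 l.
Definition fin_sums {T : Type} (S : T -> Prop) (f : T -> R) (r : R) : Prop :=
  exists l, NoDup l /\ (forall x, In x l -> S x) /\ r = finsum f l.
Definition has_sum {T : Type} (S : T -> Prop) (f : T -> R) (s : R) : Prop :=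
  is_lub (fin_sums S f) s.
Definition finite_sum {T : Type} (S : T -> Prop) (f : T -> R) : Prop :=
  exists s, has_sum S f s.
(* value of the sum (meaningful when finite) *)
Definition tsum {T : Type} (S : T -> Prop) (f : T -> R) : R :=
  epsilon (inhabits 0) (has_sum S f).

Definition is_glb (E : R -> Prop) (m : R) : Prop :=
  (forall x, E x -> m <= x) /\ (forall b, (forall x, E x -> b <= x) -> b <= m).
Definition Rsup (E : R -> Prop) : R := epsilon (inhabits 0) (is_lub E).
Definition Rinf (E : R -> Prop) : R := epsilon (inhabits 0) (is_glb E).

(* limsup u = inf_n sup_{k >= n} u k  (for bounded real sequences) *)
Definition limsup (u : nat -> R) : R :=
  Rinf (fun r => exists n, r = Rsup (fun v => exists k, (n <= k)%nat /\ v = u k)).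

Definition step_dist (d : nat) (mu : list Z -> R) : Prop :=
  (forall x, 0 <= mu x) /\ (forall x, ~ pt d x -> mu x = 0) /\ has_sum (pt d) mu 1.

(* law d mu n x = P^0 { X_n = x } *)
Fixpoint law (d : nat) (mu : list Z -> R) (n : nat) (x : list Z) : R :=
  match n with
  | O => if list_eq_dec Z.eq_dec x (zero d) then 1 else 0
  | S m => tsum (pt d) (fun y => law d mu m y * mu (zsub x y))
  end.

Definition green (d : nat) (mu : list Z -> R) (x : list Z) : R :=
  tsum (fun _ : nat => True) (fun n => law d mu n x).

Definition transient (d : nat) (mu : list Z -> R) : Prop :=
  forall x, pt d x -> finite_sum (fun _ : nat => True) (fun n => law d mu n x).

Definition V (d k : nat) (x : list Z) : Prop :=
  pt d x /\ Forall (fun z => (- 2 ^ Z.of_nat k <= z < 2 ^ Z.of_nat k)%Z) x.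

Definition U (d : nat) (mu : list Z -> R) (A : list Z -> Prop) : R :=
  tsum A (green d mu).

Definition gamma_set (d : nat) (mu : list Z -> R) (g : R) : Prop :=
  0 < g < INR d /\
  finite_sum (fun x => pt d x /\ x <> zero d)
             (fun x => green d mu x * Rpower (enorm x) (- g)).

Definition gamma_c (d : nat) (mu : list Z -> R) : R :=
  match excluded_middle_informative (exists g, gamma_set d mu g) with
  | left _ => Rinf (gamma_set d mu)
  | right _ => INR d
  end.

Definition log2 (r : R) : R := ln r / ln 2.

(* Write [u n = U(V_n)] and [L = limsup log2(u n) / n].  The first-passage decomposition
   gives [g(0,x) <= g(0,0)], hence [g(0,0) <= u n <= 2^((n+1)d) g(0,0)] and [0 <= L <= d].
   If [gam > L], then [u n <= C 2^(beta n)] for some [beta < gam]; since [|x| >= 2^(k-1)] on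
   the dyadic shell [V_k \ V_(k-1)], the series [sum g(0,x) |x|^(-gam)] is dominated by a
   geometric series.  Conversely, if that series converges then, as [|x| <= (d+1) 2^n] on
   [V_n], [u n <= C 2^(gam n)], so [L <= gam].  Thus the infimum defining [gamma_c] is [L],
   and when no [gam < d] qualifies, [L = d]. *)

From Stdlib Require Import Reals ZArith List FinFun.
From Stdlib Require Import Lra Lia Classical ClassicalEpsilon.
Open Scope R_scope.

Section FiniteSums.
Context {T : Type}.
Implicit Types (f g : T -> R) (l : list T).

Lemma finsum_app f l1 l2 : finsum f (l1 ++ l2) = finsum f l1 + finsum f l2.
Proof. induction l1; simpl; lra. Qed.

Lemma finsum_le f g l : (forall x, In x l -> f x <= g x) -> finsum f l <= finsum g l.
Proof.
  induction l as [|a l IH]; simpl; intros H; [lra|].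
  pose proof (H a (or_introl eq_refl)). pose proof (IH (fun x Hx => H x (or_intror Hx))). lra.
Qed.

Lemma finsum_ext f g l : (forall x, In x l -> f x = g x) -> finsum f l = finsum g l.
Proof.
  intros H. apply Rle_antisym; apply finsum_le; intros x Hx; rewrite (H x Hx); lra.
Qed.

Lemma finsum_plus f g l : finsum (fun x => f x + g x) l = finsum f l + finsum g l.
Proof. induction l; simpl; lra. Qed.

Lemma finsum_scal c f l : finsum (fun x => c * f x) l = c * finsum f l.
Proof. induction l; simpl; [|rewrite IHl]; lra. Qed.

Lemma finsum_const c l : finsum (fun _ => c) l = INR (length l) * c.
Proof. induction l; simpl length; [simpl; lra|]. rewrite S_INR. simpl. rewrite IHl. lra. Qed.

Lemma finsum_filter (p : T -> bool) f l :
  finsum f (filter p l) = finsum (fun x => if p x then f x else 0) l.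
Proof. induction l as [|a l IH]; simpl; auto. destruct (p a); simpl; rewrite IH; lra. Qed.

Lemma finsum_nonneg f l : (forall x, In x l -> 0 <= f x) -> 0 <= finsum f l.
Proof.
  intros H. apply Rle_trans with (finsum (fun _ => 0) l).
  - rewrite finsum_const. lra.
  - apply finsum_le. exact H.
Qed.

Lemma finsum_map {U} (f : U -> R) (h : T -> U) l : finsum f (map h l) = finsum (fun x => f (h x)) l.
Proof. induction l; simpl; lra. Qed.

Variable eqd : forall x y : T, {x = y} + {x <> y}.

Lemma remove_NoDup l a : NoDup l -> NoDup (remove eqd a l).
Proof.
  induction l as [|b l IH]; simpl; intros Hnd; auto. inversion Hnd; subst.
  destruct (eqd a b); auto. constructor; auto. intros Hin. apply in_remove in Hin. tauto.
Qed.

Lemma finsum_remove f l a : NoDup l -> In a l -> finsum f l = f a + finsum f (remove eqd a l).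
Proof.
  induction l as [|b l IH]; simpl; intros Hnd Hin; [contradiction|].
  inversion Hnd as [|? ? Hb Hnd']; subst.
  destruct (eqd a b) as [<-|Hab].
  - rewrite notin_remove; auto.
  - destruct Hin as [->|Hin]; [congruence|]. simpl. rewrite (IH Hnd' Hin). lra.
Qed.

Lemma finsum_remove_mask f l a :
  finsum (fun x => if eqd x a then 0 else f x) l = finsum f (remove eqd a l).
Proof.
  induction l as [|b l IH]; simpl; auto.
  destruct (eqd b a), (eqd a b); subst; simpl; try congruence; lra.
Qed.

Lemma finsum_incl f l1 l2 : NoDup l1 -> NoDup l2 -> incl l1 l2 ->
  (forall x, In x l2 -> 0 <= f x) -> finsum f l1 <= finsum f l2.
Proof.
  revert l2; induction l1 as [|a l1 IH]; simpl; intros l2 Hnd1 Hnd2 Hincl Hf.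
  - apply finsum_nonneg; auto.
  - inversion Hnd1 as [|? ? Ha1 Hnd1']; subst. assert (Ha : In a l2) by (apply Hincl; left; auto).
    rewrite (finsum_remove f l2 a Hnd2 Ha).
    enough (finsum f l1 <= finsum f (remove eqd a l2)) by lra.
    apply IH.
    + exact Hnd1'.
    + apply remove_NoDup; auto.
    + intros x Hx. apply in_in_remove; [intros ->; contradiction|]. apply Hincl; right; auto.
    + intros x Hx. apply in_remove in Hx. apply Hf; tauto.
Qed.

End FiniteSums.

Lemma finsum_swap {T U} (F : T -> U -> R) l (l' : list U) :
  finsum (fun x => finsum (F x) l') l = finsum (fun y => finsum (fun x => F x y) l) l'.
Proof.
  induction l as [|a l IH]; simpl.
  - induction l'; simpl; lra.
  - rewrite IH. symmetry. apply finsum_plus.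
Qed.

Fixpoint psum (f : nat -> R) (n : nat) : R :=
  match n with O => 0 | S m => psum f m + f m end.

Lemma psum_ext f g n : (forall k, (k < n)%nat -> f k = g k) -> psum f n = psum g n.
Proof. induction n; simpl; intros H; auto. rewrite IHn, H; auto. Qed.

Lemma psum_plus f g n : psum (fun k => f k + g k) n = psum f n + psum g n.
Proof. induction n; simpl; [|rewrite IHn]; lra. Qed.

Lemma psum_scal c f n : psum (fun k => c * f k) n = c * psum f n.
Proof. induction n; simpl; [|rewrite IHn]; lra. Qed.

Lemma psum_le f g n : (forall k, (k < n)%nat -> f k <= g k) -> psum f n <= psum g n.
Proof.
  induction n; simpl; intros H; [lra|].
  pose proof (H n (Nat.lt_succ_diag_r n)). enough (psum f n <= psum g n) by lra. auto.
Qed.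

Lemma psum_nonneg f n : (forall k, (k < n)%nat -> 0 <= f k) -> 0 <= psum f n.
Proof.
  induction n; simpl; intros H; [lra|].
  pose proof (H n (Nat.lt_succ_diag_r n)). enough (0 <= psum f n) by lra. auto.
Qed.

Lemma psum_ge_term f n k : (forall j, (j < n)%nat -> 0 <= f j) -> (k < n)%nat -> f k <= psum f n.
Proof.
  induction n; simpl; intros H Hk; [lia|].
  assert (0 <= psum f n) by (apply psum_nonneg; auto).
  destruct (Nat.eq_dec k n) as [->|Hkn]; [lra|].
  assert (f k <= psum f n) by (apply IHn; auto; lia). pose proof (H n ltac:(lia)). lra.
Qed.

Lemma finsum_seq f n : finsum f (seq 0 n) = psum f n.
Proof. induction n; [reflexivity|]. rewrite seq_S, finsum_app, IHn. simpl. lra. Qed.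

Lemma finsum_psum {T} (F : nat -> T -> R) n l :
  finsum (fun x => psum (fun k => F k x) n) l = psum (fun k => finsum (F k) l) n.
Proof. rewrite <- finsum_seq, finsum_swap. apply finsum_ext. intros; symmetry; apply finsum_seq. Qed.

Lemma psum_convolution (a b : nat -> R) N :
  psum (fun n => psum (fun k => a k * b (n - k)%nat) (S n)) N =
  psum (fun k => a k * psum b (N - k)) N.
Proof.
  induction N as [|N IH]; [simpl; lra|].
  change (psum (fun n => psum (fun k => a k * b (n - k)%nat) (S n)) (S N)) with
    (psum (fun n => psum (fun k => a k * b (n - k)%nat) (S n)) N +
     psum (fun k => a k * b (N - k)%nat) (S N)).
  rewrite IH, (psum_ext (fun k => a k * psum b (S N - k))
                        (fun k => a k * psum b (N - k) + a k * b (N - k)%nat)).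
  - rewrite psum_plus. simpl. rewrite Nat.sub_diag. simpl. lra.
  - intros k Hk. replace (S N - k)%nat with (S (N - k)) by lia. simpl. lra.
Qed.

Lemma psum_geometric_le q n : 0 <= q < 1 -> psum (fun k => q ^ k) n <= 1 / (1 - q).
Proof.
  intros Hq. assert (Hsum : psum (fun k => q ^ k) n * (1 - q) = 1 - q ^ n).
  { induction n; simpl; [lra|]. rewrite Rmult_plus_distr_r, IHn. ring. }
  assert (0 <= q ^ n) by (apply pow_le; lra).
  apply Rmult_le_reg_r with (1 - q); [lra|]. rewrite Hsum. field_simplify; lra.
Qed.

Section Summation.
Context {T : Type} (S : T -> Prop).
Implicit Types (f g : T -> R) (l : list T).

Lemma has_sum_unique f a b : has_sum S f a -> has_sum S f b -> a = b.
Proof. intros [Ha1 Ha2] [Hb1 Hb2]. apply Rle_antisym; auto. Qed.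

Lemma tsum_eq f s : has_sum S f s -> tsum S f = s.
Proof.
  intros H. apply (has_sum_unique f); auto.
  exact (epsilon_spec (inhabits 0) (has_sum S f) (ex_intro _ s H)).
Qed.

Lemma has_sum_ub f s l :
  has_sum S f s -> NoDup l -> (forall x, In x l -> S x) -> finsum f l <= s.
Proof. intros [H _] Hnd Hl. apply H. exists l; auto. Qed.

Lemma has_sum_le f s B : has_sum S f s ->
  (forall l, NoDup l -> (forall x, In x l -> S x) -> finsum f l <= B) -> s <= B.
Proof. intros [_ H] HB. apply H. intros r (l & Hnd & Hl & ->). auto. Qed.

Lemma has_sum_nonneg f s : has_sum S f s -> 0 <= s.
Proof.
  intros H. apply (has_sum_ub f s nil H); [constructor | contradiction].
Qed.

Lemma has_sum_ge_term f s x : S x -> has_sum S f s -> f x <= s.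
Proof.
  intros Hx H. replace (f x) with (finsum f (x :: nil)) by (simpl; lra).
  apply (has_sum_ub f s _ H); [repeat constructor; auto | intros y [<- | []]; auto].
Qed.

Lemma has_sum_exists f B :
  (forall l, NoDup l -> (forall x, In x l -> S x) -> finsum f l <= B) ->
  exists s, has_sum S f s /\ s <= B.
Proof.
  intros HB. destruct (completeness (fin_sums S f)) as [s Hs].
  - exists B. intros r (l & Hnd & Hl & ->). auto.
  - exists 0, nil. repeat split; [constructor | contradiction].
  - exists s. split; auto. apply (has_sum_le f s B Hs HB).
Qed.

Lemma has_sum_ext f g s : (forall x, S x -> f x = g x) -> has_sum S f s -> has_sum S g s.
Proof.
  intros Hfg [Hub Hlub].
  assert (Hsame : forall r, fin_sums S f r <-> fin_sums S g r).
  { intros r. split; intros (l & Hnd & Hl & ->); exists l; repeat split; auto;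
      apply finsum_ext; intros x Hx; rewrite (Hfg x (Hl x Hx)); auto. }
  split.
  - intros r Hr. apply Hub, Hsame, Hr.
  - intros b Hb. apply Hlub. intros r Hr. apply Hb, Hsame, Hr.
Qed.

Lemma has_sum_zero : has_sum S (fun _ => 0) 0.
Proof.
  split.
  - intros r (l & _ & _ & ->). rewrite finsum_const. lra.
  - intros b Hb. apply Hb. exists nil. repeat split; [constructor | contradiction].
Qed.

Lemma has_sum_scal f a c : 0 <= c -> has_sum S f a -> has_sum S (fun x => c * f x) (c * a).
Proof.
  intros Hc Ha. destruct (Req_dec c 0) as [->|Hc0].
  - rewrite Rmult_0_l. apply (has_sum_ext (fun _ => 0)); [intros; lra | apply has_sum_zero].
  - split.
    + intros r (l & Hnd & Hl & ->). rewrite finsum_scal.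
      apply Rmult_le_compat_l; auto. apply (has_sum_ub f a); auto.
    + intros B HB. enough (a <= B / c) as Hle.
      { apply Rmult_le_compat_l with (r := c) in Hle; [|lra]. field_simplify in Hle; lra. }
      apply (has_sum_le f a _ Ha). intros l Hnd Hl.
      enough (c * finsum f l <= B) by (apply Rmult_le_reg_l with c; [lra|]; field_simplify; lra).
      rewrite <- finsum_scal. apply HB. exists l; auto.
Qed.

Lemma has_sum_reindex (phi psi : T -> T) f s :
  (forall x, S x -> S (phi x)) -> (forall x, S x -> S (psi x)) ->
  (forall x, S x -> phi (psi x) = x) -> (forall x, S x -> psi (phi x) = x) ->
  has_sum S f s -> has_sum S (fun x => f (phi x)) s.
Proof.
  intros Hphi Hpsi Hphipsi Hpsiphi [Hub Hlub].
  assert (Hmap : forall (g h : T -> T) l, (forall x, S x -> S (g x)) ->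
            (forall x, S x -> h (g x) = x) -> NoDup l -> (forall x, In x l -> S x) ->
            NoDup (map g l) /\ forall y, In y (map g l) -> S y).
  { intros g h l Hg Hhg Hnd Hl. split.
    - apply (NoDup_map_inv h). rewrite map_map, (map_ext_in _ (fun x => x)), map_id; auto.
    - intros y Hy. apply in_map_iff in Hy. destruct Hy as (x & <- & Hx). auto. }
  split.
  - intros r (l & Hnd & Hl & ->). rewrite <- finsum_map. apply Hub.
    exists (map phi l). destruct (Hmap phi psi l) as [Hnd' Hl']; auto.
  - intros b Hb. apply Hlub. intros r (l & Hnd & Hl & ->).
    destruct (Hmap psi phi l) as [Hnd' Hl']; auto.
    replace (finsum f l) with (finsum (fun x => f (phi x)) (map psi l)).
    + apply Hb. exists (map psi l); auto.
    + rewrite finsum_map. apply finsum_ext. intros x Hx. rewrite Hphipsi; auto.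
Qed.

Variable eqd : forall x y : T, {x = y} + {x <> y}.

Lemma has_sum_plus f g a b :
  (forall x, S x -> 0 <= f x) -> (forall x, S x -> 0 <= g x) ->
  has_sum S f a -> has_sum S g b -> has_sum S (fun x => f x + g x) (a + b).
Proof.
  intros Hf Hg Ha Hb. split.
  - intros r (l & Hnd & Hl & ->). rewrite finsum_plus.
    pose proof (has_sum_ub f a l Ha Hnd Hl). pose proof (has_sum_ub g b l Hb Hnd Hl). lra.
  - intros B HB.
    (* A pair of finite sums is dominated by the sum over their union. *)
    assert (Hpair : forall l1 l2, NoDup l1 -> (forall x, In x l1 -> S x) ->
              NoDup l2 -> (forall x, In x l2 -> S x) -> finsum f l1 + finsum g l2 <= B).
    { intros l1 l2 Hnd1 Hl1 Hnd2 Hl2. set (l := nodup eqd (l1 ++ l2)).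
      assert (Hnd : NoDup l) by apply NoDup_nodup.
      assert (Hl : forall x, In x l -> S x).
      { intros x Hx. apply nodup_In, in_app_or in Hx. destruct Hx; auto. }
      assert (finsum f l1 <= finsum f l).
      { apply (finsum_incl eqd); auto.
        intros x Hx. apply nodup_In, in_or_app. auto. }
      assert (finsum g l2 <= finsum g l).
      { apply (finsum_incl eqd); auto.
        intros x Hx. apply nodup_In, in_or_app. auto. }
      assert (finsum (fun x => f x + g x) l <= B) by (apply HB; exists l; auto).
      rewrite finsum_plus in *. lra. }
    enough (a <= B - b) by lra.
    apply (has_sum_le f a _ Ha). intros l1 Hnd1 Hl1.
    enough (b <= B - finsum f l1) by lra.
    apply (has_sum_le g b _ Hb). intros l2 Hnd2 Hl2. specialize (Hpair l1 l2 Hnd1 Hl1 Hnd2 Hl2). lra.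
Qed.

Lemma has_sum_psum (F : nat -> T -> R) (s : nat -> R) N :
  (forall k x, (k < N)%nat -> S x -> 0 <= F k x) ->
  (forall k, (k < N)%nat -> has_sum S (F k) (s k)) ->
  has_sum S (fun x => psum (fun k => F k x) N) (psum s N).
Proof.
  induction N as [|N IH]; intros HF Hs; simpl.
  - apply has_sum_zero.
  - apply has_sum_plus; auto.
    intros x Hx. apply psum_nonneg. intros; apply HF; auto; lia.
Qed.

(* Truncate all the inner sums to one common finite set, the union of their truncations. *)
Lemma finsum_has_sum_le {Y} (F : Y -> T -> R) (s : Y -> R) (ly : list Y) B :
  (forall y x, S x -> 0 <= F y x) -> (forall y, In y ly -> has_sum S (F y) (s y)) ->
  (forall l, NoDup l -> (forall x, In x l -> S x) -> finsum (fun y => finsum (F y) l) ly <= B) ->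
  finsum s ly <= B.
Proof.
  revert B. induction ly as [|y ly IH]; simpl; intros B HF Hs HB.
  - apply (HB nil); [constructor | contradiction].
  - enough (finsum s ly <= B - s y) by lra. apply IH; auto.
    intros l Hnd Hl. enough (s y <= B - finsum (fun y => finsum (F y) l) ly) by lra.
    apply (has_sum_le (F y) _ _ (Hs y (or_introl eq_refl))). intros l' Hnd' Hl'.
    set (L := nodup eqd (l ++ l')).
    assert (HndL : NoDup L) by apply NoDup_nodup.
    assert (HlL : forall x, In x L -> S x).
    { intros x Hx. apply nodup_In, in_app_or in Hx. destruct Hx; auto. }
    assert (Hincl : forall l0, incl l0 (l ++ l') -> NoDup l0 -> forall y, finsum (F y) l0 <= finsum (F y) L).
    { intros l0 Hl0 Hnd0 y'. apply (finsum_incl eqd); auto.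
      intros x Hx. apply nodup_In. auto. }
    specialize (HB L HndL HlL).
    assert (finsum (F y) l' <= finsum (F y) L) by (apply Hincl; auto using incl_appr, incl_refl).
    assert (finsum (fun y => finsum (F y) l) ly <= finsum (fun y => finsum (F y) L) ly).
    { apply finsum_le. intros y' _. apply Hincl; auto using incl_appl, incl_refl. }
    lra.
Qed.

End Summation.

Definition zadd (x y : list Z) : list Z := map (fun p => (fst p + snd p)%Z) (combine x y).
Definition list_Z_eq_dec := list_eq_dec Z.eq_dec.

Lemma zsub_cons a x b y : zsub (a :: x) (b :: y) = (a - b)%Z :: zsub x y.
Proof. reflexivity. Qed.

Lemma zadd_cons a x b y : zadd (a :: x) (b :: y) = (a + b)%Z :: zadd x y.
Proof. reflexivity. Qed.

Lemma pt_zsub d x y : pt d x -> pt d y -> pt d (zsub x y).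
Proof. unfold pt, zsub. intros. rewrite length_map, length_combine. lia. Qed.

Lemma pt_zadd d x y : pt d x -> pt d y -> pt d (zadd x y).
Proof. unfold pt, zadd. intros. rewrite length_map, length_combine. lia. Qed.

Lemma pt_zero d : pt d (zero d).
Proof. apply repeat_length. Qed.

Lemma zsub_zadd x y : length x = length y -> zsub (zadd x y) y = x.
Proof.
  revert y; induction x; destruct y; simpl; intros H; try discriminate; auto.
  rewrite zadd_cons, zsub_cons, IHx by lia. f_equal. lia.
Qed.

Lemma zadd_zsub x y : length x = length y -> zadd (zsub x y) y = x.
Proof.
  revert y; induction x; destruct y; simpl; intros H; try discriminate; auto.
  rewrite zsub_cons, zadd_cons, IHx by lia. f_equal. lia.
Qed.

Lemma zsub_zsub x y : length x = length y -> zsub x (zsub x y) = y.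
Proof.
  revert y; induction x; destruct y; simpl; intros H; try discriminate; auto.
  rewrite !zsub_cons, IHx by lia. f_equal. lia.
Qed.

Lemma zsub_zsub_r x y z : length y = length x -> length z = length x ->
  zsub (zsub y x) (zsub z x) = zsub y z.
Proof.
  revert y z; induction x; intros [|b y] [|c z]; cbn [length]; intros Hy Hz; try discriminate; auto.
  rewrite !zsub_cons, IHx by lia. f_equal. lia.
Qed.

Lemma zsub_diag x : zsub x x = zero (length x).
Proof.
  induction x; simpl; auto. rewrite zsub_cons, IHx. unfold zero. simpl. f_equal. lia.
Qed.

Lemma zsub_eq_zero d x y : pt d x -> pt d y -> zsub x y = zero d -> x = y.
Proof.
  unfold pt. intros Hx Hy H. rewrite <- (zadd_zsub x y), H, <- Hy by lia.
  clear. induction y; simpl; auto. unfold zero in *. simpl. rewrite zadd_cons, IHy. reflexivity.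
Qed.

Section Walk.
Variables (d : nat) (mu : list Z -> R).
Hypothesis Hmu : step_dist d mu.

Definition step (f : list Z -> R) (y : list Z) : R := tsum (pt d) (fun z => f z * mu (zsub y z)).

Definition mass_le (f : list Z -> R) (M : R) : Prop :=
  (forall z, pt d z -> 0 <= f z) /\
  (forall l, NoDup l -> (forall z, In z l -> pt d z) -> finsum f l <= M).

Definition dirac (a y : list Z) : R := if list_Z_eq_dec y a then 1 else 0.

Definition avoid (x : list Z) (f : list Z -> R) (z : list Z) : R :=
  if list_Z_eq_dec z x then 0 else f z.

Lemma mu_nonneg x : 0 <= mu x.
Proof. apply Hmu. Qed.

Lemma finsum_mu_inj_le (h : list Z -> list Z) l :
  NoDup l -> (forall z, In z l -> pt d z) -> (forall z, pt d z -> pt d (h z)) ->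
  (forall a b, pt d a -> pt d b -> h a = h b -> a = b) -> finsum (fun z => mu (h z)) l <= 1.
Proof.
  intros Hnd Hl Hh Hinj. rewrite <- finsum_map. destruct Hmu as (_ & _ & Hsum).
  apply (has_sum_ub _ _ _ _ Hsum).
  - apply Injective_map_NoDup_in; auto.
  - intros y Hy. apply in_map_iff in Hy. destruct Hy as (z & <- & Hz). auto.
Qed.

Lemma finsum_mu_from_le y l : pt d y -> NoDup l -> (forall z, In z l -> pt d z) ->
  finsum (fun z => mu (zsub y z)) l <= 1.
Proof.
  intros Hy Hnd Hl. apply finsum_mu_inj_le; auto using pt_zsub.
  unfold pt in *. intros a b Ha Hb E.
  rewrite <- (zsub_zsub y a), <- (zsub_zsub y b) by lia. congruence.
Qed.

Lemma finsum_mu_to_le z l : pt d z -> NoDup l -> (forall y, In y l -> pt d y) ->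
  finsum (fun y => mu (zsub y z)) l <= 1.
Proof.
  intros Hz Hnd Hl. apply (finsum_mu_inj_le (fun y => zsub y z)); auto using pt_zsub.
  unfold pt in *. intros a b Ha Hb E.
  rewrite <- (zadd_zsub a z), <- (zadd_zsub b z) by lia. congruence.
Qed.

Lemma mass_le_pointwise f M z : mass_le f M -> pt d z -> f z <= M.
Proof.
  intros [_ Hf] Hz. replace (f z) with (finsum f (z :: nil)) by (simpl; lra).
  apply Hf; [repeat constructor; auto | intros z' [<- | []]; auto].
Qed.

Lemma step_has_sum f M y : mass_le f M -> pt d y ->
  has_sum (pt d) (fun z => f z * mu (zsub y z)) (step f y).
Proof.
  intros Hf Hy.
  destruct (has_sum_exists (pt d) (fun z => f z * mu (zsub y z)) M) as (s & Hs & _).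
  - intros l Hnd Hl. apply Rle_trans with (finsum (fun z => M * mu (zsub y z)) l).
    + apply finsum_le. intros z Hz.
      apply Rmult_le_compat_r; [apply mu_nonneg | apply (mass_le_pointwise f); auto].
    + assert (0 <= M) by (apply (proj2 Hf nil); [constructor | contradiction]).
      rewrite finsum_scal. pose proof (finsum_mu_from_le y l Hy Hnd Hl). nra.
  - unfold step. rewrite (tsum_eq _ _ _ Hs). exact Hs.
Qed.

Lemma step_mass_le f M : mass_le f M -> mass_le (step f) M.
Proof.
  intros Hf. split.
  - intros y Hy. apply (has_sum_nonneg _ _ _ (step_has_sum f M y Hf Hy)).
  - intros l Hnd Hl.
    apply (finsum_has_sum_le (pt d) list_Z_eq_dec (fun y z => f z * mu (zsub y z))).
    + intros y z Hz. apply Rmult_le_pos; [apply Hf; auto | apply mu_nonneg].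
    + intros y Hy. apply (step_has_sum f M); auto.
    + intros lz Hndz Hlz. rewrite finsum_swap.
      apply Rle_trans with (finsum f lz); [|apply Hf; auto].
      apply finsum_le. intros z Hz. rewrite finsum_scal.
      pose proof (finsum_mu_to_le z l (Hlz z Hz) Hnd Hl). pose proof (proj1 Hf z (Hlz z Hz)). nra.
Qed.

Lemma dirac_mass_le a : mass_le (dirac a) 1.
Proof.
  split.
  - intros z _. unfold dirac. destruct list_Z_eq_dec; lra.
  - intros l Hnd _. induction l as [|b l IH]; simpl; [lra|]. inversion Hnd as [|? ? Hb Hnd']; subst.
    unfold dirac at 1. destruct (list_Z_eq_dec b a) as [->|].
    + enough (finsum (dirac a) l = 0) by lra.
      rewrite (finsum_ext _ (fun _ => 0)), finsum_const; [lra|].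
      intros z Hz. unfold dirac. destruct list_Z_eq_dec; subst; tauto.
    + specialize (IH Hnd'). lra.
Qed.

Lemma law_mass_le n : mass_le (law d mu n) 1.
Proof. induction n; [apply dirac_mass_le | apply step_mass_le; auto]. Qed.

Lemma law_translate x n y : pt d x -> pt d y ->
  has_sum (pt d) (fun z => law d mu n (zsub z x) * mu (zsub y z)) (law d mu (S n) (zsub y x)).
Proof.
  intros Hx Hy.
  pose proof (step_has_sum _ _ (zsub y x) (law_mass_le n) (pt_zsub _ _ _ Hy Hx)) as H.
  apply (has_sum_reindex _ (fun z => zsub z x) (fun w => zadd w x)) in H.
  - eapply has_sum_ext; [|exact H]. intros z Hz. unfold pt in *. rewrite zsub_zsub_r by lia. reflexivity.
  - intros; apply pt_zsub; auto.
  - intros; apply pt_zadd; auto.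
  - unfold pt in *. intros w Hw. apply zsub_zadd. lia.
  - unfold pt in *. intros w Hw. apply zadd_zsub. lia.
Qed.

Lemma avoid_mass_le x f M : pt d x -> mass_le f M -> mass_le (avoid x f) (M - f x).
Proof.
  intros Hx [Hf HM]. split.
  - intros z Hz. unfold avoid. destruct list_Z_eq_dec; auto; lra.
  - intros l Hnd Hl. unfold avoid. rewrite (finsum_remove_mask list_Z_eq_dec).
    enough (finsum f (x :: remove list_Z_eq_dec x l) <= M) by (simpl in *; lra).
    apply HM.
    + constructor; [apply remove_In | apply remove_NoDup; auto].
    + intros z [<- | Hz]; auto. apply in_remove in Hz. apply Hl; tauto.
Qed.

Lemma law_zero_zsub x y : pt d x -> pt d y -> law d mu 0 (zsub y x) = dirac x y.
Proof.
  intros Hx Hy. change (law d mu 0) with (dirac (zero d)). unfold dirac.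
  destruct (list_Z_eq_dec y x) as [->|Hne].
  - rewrite zsub_diag, Hx. destruct list_Z_eq_dec; congruence.
  - destruct list_Z_eq_dec as [E|]; auto. apply zsub_eq_zero in E; auto. congruence.
Qed.

Lemma avoid_split x f y : pt d x -> pt d y -> f y = f x * law d mu 0 (zsub y x) + avoid x f y.
Proof.
  intros Hx Hy. rewrite law_zero_zsub by auto. unfold dirac, avoid.
  destruct list_Z_eq_dec as [->|]; lra.
Qed.

(* [taboo x n y] is the probability that the walk is at [y] at time [n] without having
   visited [x] at times [0, ..., n-1]; thus [taboo x n x] is the probability that the
   first visit to [x] happens at time [n]. *)
Fixpoint taboo (x : list Z) (n : nat) : list Z -> R :=
  match n with
  | O => dirac (zero d)
  | S m => step (avoid x (taboo x m))
  end.

Lemma taboo_mass_le x n : pt d x -> mass_le (taboo x n) (1 - psum (fun k => taboo x k x) n).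
Proof.
  intros Hx. induction n as [|n IH]; simpl.
  - rewrite Rminus_0_r. apply dirac_mass_le.
  - replace (1 - (psum (fun k => taboo x k x) n + taboo x n x))
      with (1 - psum (fun k => taboo x k x) n - taboo x n x) by ring.
    apply step_mass_le, avoid_mass_le; auto.
Qed.

Lemma taboo_nonneg x n z : pt d x -> pt d z -> 0 <= taboo x n z.
Proof. intros Hx Hz. apply (taboo_mass_le x n Hx); auto. Qed.

Lemma psum_taboo_le1 x n : pt d x -> psum (fun k => taboo x k x) n <= 1.
Proof.
  intros Hx. destruct (taboo_mass_le x n Hx) as [_ Hmass].
  pose proof (Hmass nil (NoDup_nil _) (fun z Hz => False_ind _ Hz)) as Hnil. simpl in Hnil. lra.
Qed.

(* Decomposition according to the time [k] of the first visit to [x]. *)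
Lemma law_first_passage x n y : pt d x -> pt d y ->
  law d mu n y = psum (fun k => taboo x k x * law d mu (n - k) (zsub y x)) (S n) + avoid x (taboo x n) y.
Proof.
  intros Hx. revert y. induction n as [|n IH]; intros y Hy.
  - cbn [psum]. rewrite Rplus_0_l. exact (avoid_split x (law d mu 0) y Hx Hy).
  - assert (Hnn : forall k z, pt d z -> 0 <= taboo x k x * (law d mu (n - k) (zsub z x) * mu (zsub y z))).
    { intros k z Hz. apply Rmult_le_pos; [apply taboo_nonneg; auto|].
      apply Rmult_le_pos; [apply law_mass_le, pt_zsub; auto | apply mu_nonneg]. }
    assert (Hexp : has_sum (pt d) (fun z => law d mu n z * mu (zsub y z))
              (psum (fun k => taboo x k x * law d mu (S (n - k)) (zsub y x)) (S n) + taboo x (S n) y)).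
    { apply (has_sum_ext _
        (fun z => psum (fun k => taboo x k x * (law d mu (n - k) (zsub z x) * mu (zsub y z))) (S n)
                  + avoid x (taboo x n) z * mu (zsub y z))).
      - intros z Hz. rewrite (IH z Hz), Rmult_plus_distr_r. f_equal.
        rewrite Rmult_comm, <- psum_scal. apply psum_ext. intros; ring.
      - apply has_sum_plus; [apply list_Z_eq_dec | | | |].
        + intros z Hz. apply psum_nonneg. auto.
        + intros z Hz. apply Rmult_le_pos; [|apply mu_nonneg].
          apply (avoid_mass_le x _ _ Hx (taboo_mass_le x n Hx)); auto.
        + apply has_sum_psum; [apply list_Z_eq_dec | auto |].
          intros k _. apply has_sum_scal; [apply taboo_nonneg; auto | apply law_translate; auto].
        + apply (step_has_sum _ _ y (avoid_mass_le x _ _ Hx (taboo_mass_le x n Hx)) Hy). }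
    change (law d mu (S n) y) with (tsum (pt d) (fun z => law d mu n z * mu (zsub y z))).
    rewrite (tsum_eq _ _ _ Hexp), (avoid_split x (taboo x (S n)) y Hx Hy).
    change (psum ?f (S (S n))) with (psum f (S n) + f (S n)). cbv beta. rewrite Nat.sub_diag.
    rewrite (psum_ext (fun k => taboo x k x * law d mu (S n - k) (zsub y x))
                      (fun k => taboo x k x * law d mu (S (n - k)) (zsub y x))); [ring|].
    intros k Hk. replace (S n - k)%nat with (S (n - k)) by lia. reflexivity.
Qed.

End Walk.

Section Green.
Variables (d : nat) (mu : list Z -> R).
Hypotheses (Hmu : step_dist d mu) (Htr : transient d mu).

Lemma green_has_sum x : pt d x -> has_sum (fun _ : nat => True) (fun n => law d mu n x) (green d mu x).
Proof. intros Hx. destruct (Htr x Hx) as [s Hs]. unfold green. rewrite (tsum_eq _ _ _ Hs). exact Hs. Qed.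

Lemma green_nonneg x : pt d x -> 0 <= green d mu x.
Proof. intros Hx. exact (has_sum_nonneg _ _ _ (green_has_sum x Hx)). Qed.

Lemma green_zero_ge1 : 1 <= green d mu (zero d).
Proof.
  pose proof (has_sum_ge_term _ _ _ 0%nat I (green_has_sum _ (pt_zero d))) as H. simpl in H.
  destruct list_eq_dec; [exact H | congruence].
Qed.

Lemma psum_law_le_green x N : pt d x -> psum (fun n => law d mu n x) N <= green d mu x.
Proof.
  intros Hx. rewrite <- finsum_seq.
  apply (has_sum_ub _ _ _ _ (green_has_sum x Hx)); [apply seq_NoDup | auto].
Qed.

(* The walk must first reach [x]; afterwards it visits [x] at most [green 0] times on average. *)
Lemma green_le_green_zero x : pt d x -> green d mu x <= green d mu (zero d).
Proof.
  intros Hx. set (G0 := green d mu (zero d)). assert (HG0 : 1 <= G0) by apply green_zero_ge1.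
  apply (has_sum_le _ _ _ _ (green_has_sum x Hx)). intros l Hnd _.
  set (N := S (list_max l)).
  apply Rle_trans with (psum (fun n => law d mu n x) N).
  { rewrite <- finsum_seq. apply (finsum_incl Nat.eq_dec); auto using seq_NoDup.
    - intros k Hk. apply in_seq. enough (k <= list_max l)%nat by (unfold N; lia).
      revert k Hk. apply Forall_forall, list_max_le, le_n.
    - intros k _. apply (law_mass_le d mu Hmu k); auto. }
  rewrite (psum_ext _ (fun n => psum (fun k => taboo d mu x k x * law d mu (n - k) (zero d)) (S n))).
  2:{ intros n _. rewrite (law_first_passage d mu Hmu x n x Hx Hx), zsub_diag, Hx.
      unfold avoid. destruct list_Z_eq_dec; [lra | congruence]. }
  rewrite (psum_convolution (fun k => taboo d mu x k x) (fun j => law d mu j (zero d))).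
  apply Rle_trans with (psum (fun k => G0 * taboo d mu x k x) N).
  - apply psum_le. intros k _. rewrite (Rmult_comm G0).
    apply Rmult_le_compat_l; [apply taboo_nonneg; auto | apply psum_law_le_green, pt_zero].
  - rewrite psum_scal. pose proof (psum_taboo_le1 d mu Hmu x N Hx). nra.
Qed.

End Green.

Definition dyadic_interval (n : nat) : list Z :=
  map (fun i => (- 2 ^ Z.of_nat n + Z.of_nat i)%Z) (seq 0 (2 ^ S n)).

Fixpoint words (c : list Z) (d : nat) : list (list Z) :=
  match d with
  | O => nil :: nil
  | S d' => flat_map (fun z => map (cons z) (words c d')) c
  end.

Lemma length_words c d : length (words c d) = (length c ^ d)%nat.
Proof.
  induction d as [|d IH]; simpl; auto. rewrite length_flat_map.
  rewrite (map_ext _ (fun _ => length (words c d))) by (intros; apply length_map).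
  rewrite IH. clear IH. generalize (length c ^ d)%nat. intros m. induction c; simpl; auto.
Qed.

Lemma In_words c x : Forall (fun z => In z c) x -> In x (words c (length x)).
Proof.
  induction x as [|a x IH]; simpl; intros H; auto. inversion H; subst.
  apply in_flat_map. exists a. split; auto. apply in_map. auto.
Qed.

Lemma In_dyadic_interval n z : (- 2 ^ Z.of_nat n <= z < 2 ^ Z.of_nat n)%Z -> In z (dyadic_interval n).
Proof.
  intros H. apply in_map_iff. exists (Z.to_nat (z + 2 ^ Z.of_nat n)). split; [lia|].
  apply in_seq. split; [lia|]. apply Nat2Z.inj_lt.
  rewrite Z2Nat.id, Nat.add_0_l, Nat2Z.inj_pow by lia.
  change (Z.of_nat 2) with 2%Z. rewrite Nat2Z.inj_succ, Z.pow_succ_r; lia.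
Qed.

Lemma V_card_le d n l : NoDup l -> (forall x, In x l -> V d n x) -> (length l <= (2 ^ S n) ^ d)%nat.
Proof.
  intros Hnd Hl. replace (2 ^ S n)%nat with (length (dyadic_interval n))
    by (unfold dyadic_interval; rewrite length_map, length_seq; auto).
  rewrite <- length_words. apply NoDup_incl_length; auto.
  intros x Hx. destruct (Hl x Hx) as [Hpt HV]. unfold pt in Hpt. rewrite <- Hpt.
  apply In_words. revert HV. apply Forall_impl, In_dyadic_interval.
Qed.

Lemma V_zero d n : V d n (zero d).
Proof.
  split; [apply pt_zero|]. apply Forall_forall. intros z Hz. apply repeat_spec in Hz. subst.
  pose proof (Z.pow_pos_nonneg 2 (Z.of_nat n)). lia.
Qed.

Lemma V_mono d m n x : (m <= n)%nat -> V d m x -> V d n x.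
Proof.
  intros Hmn [Hpt HV]. split; auto. revert HV. apply Forall_impl. intros z Hz.
  assert (2 ^ Z.of_nat m <= 2 ^ Z.of_nat n)%Z by (apply Z.pow_le_mono_r; lia). lia.
Qed.

Lemma V_cover d (l : list (list Z)) : (forall x, In x l -> pt d x) ->
  exists N, forall x, In x l -> V d N x.
Proof.
  induction l as [|a l IH]; intros Hl.
  - exists 0%nat. contradiction.
  - destruct IH as [N HN]; [intros; apply Hl; right; auto|].
    set (K := Nat.max N (Z.to_nat (fold_right Z.max 0%Z (map Z.abs a)))).
    exists K. intros x [<- | Hx]; [|apply (V_mono d N); auto; lia].
    split; [apply Hl; left; auto|]. apply Forall_forall. intros z Hz.
    assert (Z.abs z <= fold_right Z.max 0%Z (map Z.abs a))%Z.
    { clear -Hz. induction a as [|b a IH]; simpl in *; [contradiction|].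
      destruct Hz as [->|Hz]; [lia|]. specialize (IH Hz). lia. }
    assert (Z.abs z < 2 ^ Z.abs z)%Z by (apply Z.pow_gt_lin_r; lia).
    assert (2 ^ Z.abs z <= 2 ^ Z.of_nat K)%Z by (apply Z.pow_le_mono_r; lia). lia.
Qed.

Definition shell (d k : nat) (x : list Z) : Prop :=
  V d k x /\ match k with O => True | S j => ~ V d j x end.

Lemma V_shell d N x : V d N x -> exists k, (k <= N)%nat /\ shell d k x.
Proof.
  induction N as [|N IH]; intros HV.
  - exists 0%nat. split; [lia | split; auto].
  - destruct (classic (V d N x)) as [HN|HN].
    + destruct (IH HN) as (k & Hk & Hsh). exists k. split; [lia | auto].
    + exists (S N). split; [lia | split; auto].
Qed.

Lemma ln_le_compat x y : 0 < x -> x <= y -> ln x <= ln y.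
Proof. intros Hx [Hxy | ->]; [left; apply ln_increasing|]; lra. Qed.

Lemma exp_le_compat x y : x <= y -> exp x <= exp y.
Proof. intros [Hxy | ->]; [left; apply exp_increasing|]; lra. Qed.

Lemma Rpower_pos x y : 0 < Rpower x y.
Proof. apply exp_pos. Qed.

Lemma Rpower2_ge1 t : 0 <= t -> 1 <= Rpower 2 t.
Proof. intros Ht. rewrite <- (Rpower_O 2) by lra. apply Rle_Rpower; lra. Qed.

Lemma ln2_pos : 0 < ln 2.
Proof. pose proof ln_lt_2. lra. Qed.

Lemma div_INR_eventually_le C eps : 0 < eps ->
  exists N, forall n, (N <= n)%nat -> C / INR n <= eps.
Proof.
  intros Heps. destruct (archimed_cor1 (eps / (Rabs C + 1))) as (N & HN & HN0).
  { apply Rdiv_lt_0_compat; [lra | pose proof (Rabs_pos C); lra]. }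
  exists N. intros n Hn.
  assert (HNn : INR N <= INR n) by (apply le_INR; lia).
  assert (HN1 : 1 <= INR N) by (apply (le_INR 1); lia).
  assert (HC : C <= Rabs C) by apply Rle_abs.
  apply Rmult_lt_compat_r with (r := (Rabs C + 1) * INR N) in HN;
    [|apply Rmult_lt_0_compat; pose proof (Rabs_pos C); lra].
  field_simplify in HN; [|pose proof (Rabs_pos C); lra | lra].
  unfold Rdiv. apply Rle_trans with (Rabs C * / INR n); [apply Rmult_le_compat_r; [|lra]|].
  - left. apply Rinv_0_lt_compat. lra.
  - apply Rmult_le_reg_r with (INR n); [lra|]. rewrite Rmult_assoc, Rinv_l by lra. nra.
Qed.

Lemma IZR_pow2 n : IZR (2 ^ Z.of_nat n) = 2 ^ n.
Proof. rewrite <- pow_IZR. reflexivity. Qed.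

Definition sum_squares (x : list Z) : R := fold_right (fun z acc => IZR z * IZR z + acc) 0 x.

Lemma sum_squares_nonneg x : 0 <= sum_squares x.
Proof. induction x; simpl; nra. Qed.

Lemma coord_le_enorm x z : In z x -> Rabs (IZR z) <= enorm x.
Proof.
  intros Hz. unfold enorm. rewrite <- sqrt_Rsqr_abs. apply sqrt_le_1_alt. unfold Rsqr.
  induction x as [|a x IH]; simpl in *; [contradiction|].
  pose proof (sum_squares_nonneg x). unfold sum_squares in *.
  destruct Hz as [->|Hz]; [|specialize (IH Hz)]; nra.
Qed.

Lemma enorm_le_of_V d n x : V d n x -> enorm x <= (INR d + 1) * 2 ^ n.
Proof.
  intros [Hpt HV]. unfold pt in Hpt. subst d.
  assert (0 < 2 ^ n) by (apply pow_lt; lra).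
  assert (Hsq : sum_squares x <= INR (length x) * (2 ^ n * 2 ^ n)).
  { induction x as [|a x IH]; simpl length; [simpl; lra|].
    inversion HV as [|? ? Ha Hx]; subst.
    rewrite S_INR. unfold sum_squares. simpl. fold (sum_squares x).
    assert (- 2 ^ n <= IZR a <= 2 ^ n).
    { rewrite <- IZR_pow2, <- opp_IZR. split; apply IZR_le; lia. }
    specialize (IH Hx). set (B := 2 ^ n) in *. nra. }
  unfold enorm. fold (sum_squares x). pose proof (pos_INR (length x)).
  rewrite <- (sqrt_square ((INR (length x) + 1) * 2 ^ n)) by nra.
  apply sqrt_le_1_alt. set (B := 2 ^ n) in *. nra.
Qed.

Lemma enorm_shell_ge d k x : x <> zero d -> shell d k x -> 2 ^ k / 2 <= enorm x.
Proof.
  intros Hx0 [[Hpt HV] Hk].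
  enough (exists z, In z x /\ 2 ^ k / 2 <= Rabs (IZR z)) as (z & Hz & Hle)
    by (pose proof (coord_le_enorm x z Hz); lra).
  destruct k as [|j].
  - assert (exists z, In z x /\ z <> 0%Z) as (z & Hz & Hnz).
    { apply NNPP. intros Hno. apply Hx0. unfold pt in Hpt. subst d.
      apply Forall_eq_repeat, Forall_forall. intros z Hz.
      apply NNPP. intros Hnz. apply Hno. exists z. auto. }
    exists z. split; auto. simpl. rewrite <- abs_IZR.
    assert (1 <= IZR (Z.abs z)) by (apply IZR_le; lia). lra.
  - assert (exists z, In z x /\ ~ (- 2 ^ Z.of_nat j <= z < 2 ^ Z.of_nat j)%Z) as (z & Hz & Hout).
    { apply NNPP. intros Hno. apply Hk. split; auto.
      apply Forall_forall. intros z Hz. apply NNPP. intros Hout. apply Hno. exists z. auto. }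
    exists z. split; auto. replace (2 ^ S j / 2) with (2 ^ j) by (simpl; field).
    rewrite <- abs_IZR, <- IZR_pow2. apply IZR_le. lia.
Qed.

Lemma enorm_pos d x : pt d x -> x <> zero d -> 0 < enorm x.
Proof.
  intros Hpt Hx0. destruct (V_cover d (x :: nil)) as [N HN]; [intros y [<- | []]; auto|].
  destruct (V_shell d N x (HN x (or_introl eq_refl))) as (k & _ & Hsh).
  pose proof (enorm_shell_ge d k x Hx0 Hsh). pose proof (pow_lt 2 k ltac:(lra)). lra.
Qed.

Lemma Rpower_enorm_shell_le d k x gam : 0 < gam -> x <> zero d -> shell d k x ->
  Rpower (enorm x) (- gam) <= Rpower 2 (gam * (1 - INR k)).
Proof.
  intros Hgam Hx0 Hsh. pose proof ln2_pos.
  assert (Hlow : Rpower 2 (INR k - 1) <= enorm x).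
  { replace (Rpower 2 (INR k - 1)) with (2 ^ k / 2); [apply (enorm_shell_ge d); auto|].
    unfold Rminus. rewrite Rpower_plus, Rpower_Ropp, Rpower_pow, Rpower_1 by lra. reflexivity. }
  apply ln_le_compat in Hlow; [|apply Rpower_pos]. rewrite ln_Rpower in Hlow.
  unfold Rpower at 1 2. apply exp_le_compat. nra.
Qed.

Lemma Rsup_eq E m : is_lub E m -> Rsup E = m.
Proof.
  intros H. pose proof (epsilon_spec (inhabits 0) (is_lub E) (ex_intro _ m H)) as Hs.
  destruct H as [Hub Hlub], Hs as [Hsub Hslub]. apply Rle_antisym; auto.
Qed.

Lemma Rinf_eq E m : is_glb E m -> Rinf E = m.
Proof.
  intros H. pose proof (epsilon_spec (inhabits 0) (is_glb E) (ex_intro _ m H)) as Hs.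
  destruct H as [Hub Hlub], Hs as [Hsub Hslub]. apply Rle_antisym; auto.
Qed.

Lemma glb_exists (E : R -> Prop) b : (forall x, E x -> b <= x) -> (exists x, E x) -> exists m, is_glb E m.
Proof.
  intros Hb [x Hx]. destruct (completeness (fun v => E (- v))) as [m [Hm1 Hm2]].
  - exists (- b). intros v Hv. specialize (Hb _ Hv). lra.
  - exists (- x). rewrite Ropp_involutive. exact Hx.
  - exists (- m). split.
    + intros y Hy. enough (- y <= m) by lra. apply Hm1. rewrite Ropp_involutive. exact Hy.
    + intros c Hc. enough (m <= - c) by lra. apply Hm2. intros v Hv. specialize (Hc _ Hv). lra.
Qed.

Lemma limsup_spec (a : nat -> R) B : (forall n, - B <= a n <= B) ->
  (forall eps, 0 < eps -> exists N, forall n, (N <= n)%nat -> a n <= limsup a + eps) /\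
  (forall eps, 0 < eps -> forall N, exists n, (N <= n)%nat /\ limsup a - eps <= a n).
Proof.
  intros HB. set (tail n := fun v => exists k, (n <= k)%nat /\ v = a k).
  assert (Htail : forall n, is_lub (tail n) (Rsup (tail n))).
  { intros n. destruct (completeness (tail n)) as [m Hm].
    - exists B. intros v (k & _ & ->). apply HB.
    - exists (a n), n. auto.
    - rewrite (Rsup_eq _ m Hm). exact Hm. }
  assert (Hge : forall n, a n <= Rsup (tail n)) by (intros n; apply Htail; exists n; auto).
  destruct (glb_exists (fun r => exists n, r = Rsup (tail n)) (- B)) as [L HL].
  - intros r [n ->]. specialize (HB n). specialize (Hge n). lra.
  - exists (Rsup (tail 0%nat)), 0%nat. reflexivity.
  - change (limsup a) with (Rinf (fun r => exists n, r = Rsup (tail n))).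
    rewrite (Rinf_eq _ L HL). split.
    + intros eps Heps. destruct (classic (exists N, Rsup (tail N) < L + eps)) as [[N HN]|Hno].
      * exists N. intros n Hn. enough (a n <= Rsup (tail N)) by lra. apply Htail. exists n. auto.
      * exfalso. enough (L + eps <= L) by lra. apply HL. intros r [n ->].
        apply Rnot_lt_le. intros Hlt. apply Hno. exists n. exact Hlt.
    + intros eps Heps N. apply NNPP. intros Hno.
      enough (Rsup (tail N) <= L - eps) by (assert (L <= Rsup (tail N)) by (apply HL; exists N; auto); lra).
      apply Htail. intros v (k & Hk & ->). apply Rnot_lt_le. intros Hlt. apply Hno. exists k. split; auto; lra.
Qed.

Section GrowthExponent.
Variables (d : nat) (mu : list Z -> R).
Hypotheses (Hmu : step_dist d mu) (Htr : transient d mu).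

Let G0 := green d mu (zero d).
Let u (n : nat) := U d mu (V d n).
Let rate (n : nat) := log2 (u n) / INR n.

Lemma G0_ge1 : 1 <= G0.
Proof. apply green_zero_ge1; auto. Qed.

Lemma finsum_green_V_le n l : NoDup l -> (forall x, In x l -> V d n x) ->
  finsum (green d mu) l <= 2 ^ d * G0 * Rpower 2 (INR d * INR n).
Proof.
  intros Hnd Hl. pose proof G0_ge1.
  replace (2 ^ d * G0 * Rpower 2 (INR d * INR n)) with (INR ((2 ^ S n) ^ d) * G0).
  - apply Rle_trans with (finsum (fun _ => G0) l).
    + apply finsum_le. intros x Hx. apply green_le_green_zero; auto. apply Hl; auto.
    + rewrite finsum_const. apply Rmult_le_compat_r; [lra|]. apply le_INR, V_card_le; auto.
  - rewrite <- Nat.pow_mul_r, pow_INR, <- mult_INR, Rpower_pow by lra.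
    replace (INR 2) with 2 by (simpl; lra).
    replace (S n * d)%nat with (d + d * n)%nat by lia. rewrite pow_add. ring.
Qed.

Lemma U_has_sum n : has_sum (V d n) (green d mu) (u n).
Proof.
  destruct (has_sum_exists (V d n) (green d mu) _ (finsum_green_V_le n)) as (s & Hs & _).
  unfold u, U. rewrite (tsum_eq _ _ _ Hs). exact Hs.
Qed.

Lemma U_le_Rpower n : u n <= 2 ^ d * G0 * Rpower 2 (INR d * INR n).
Proof. apply (has_sum_le _ _ _ _ (U_has_sum n)), finsum_green_V_le. Qed.

Lemma U_ge_G0 n : G0 <= u n.
Proof. apply (has_sum_ge_term (V d n)); [apply V_zero | apply U_has_sum]. Qed.

Lemma U_pos n : 0 < u n.
Proof. pose proof (U_ge_G0 n). pose proof G0_ge1. lra. Qed.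

(* [rate 0 = 0], as [/ 0 = 0] in Stdlib; hence the side condition [1 <= n]. *)
Lemma rate_le_iff n beta : (1 <= n)%nat -> rate n <= beta <-> u n <= Rpower 2 (beta * INR n).
Proof.
  intros Hn. assert (Hn0 : 0 < INR n) by (apply (lt_INR 0); lia). pose proof ln2_pos.
  assert (Hscale : 0 < INR n * ln 2) by nra. pose proof (U_pos n).
  replace (rate n) with (ln (u n) / (INR n * ln 2)) by (unfold rate, log2; field; lra).
  split; intros Hle.
  - rewrite <- (exp_ln (u n)) by auto. apply exp_le_compat.
    apply Rmult_le_compat_r with (r := INR n * ln 2) in Hle; [|lra].
    field_simplify in Hle; lra.
  - apply ln_le_compat in Hle; auto. rewrite ln_Rpower in Hle.
    apply Rmult_le_reg_r with (INR n * ln 2); auto. field_simplify; lra.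
Qed.

Lemma rate_nonneg n : 0 <= rate n.
Proof.
  unfold rate, log2, Rdiv. pose proof ln2_pos.
  assert (0 <= ln (u n)).
  { rewrite <- ln_1. apply ln_le_compat; [lra|]. pose proof (U_ge_G0 n).
    pose proof G0_ge1. lra. }
  destruct n as [|n]; [simpl; rewrite Rinv_0; lra|].
  repeat apply Rmult_le_pos; auto; left; apply Rinv_0_lt_compat; auto. apply (lt_INR 0); lia.
Qed.

Lemma rate_le_of_U_le gam C n : 1 <= C -> (1 <= n)%nat -> u n <= C * Rpower 2 (gam * INR n) ->
  rate n <= gam + log2 C / INR n.
Proof.
  intros HC Hn Hu. apply rate_le_iff; auto.
  assert (0 < INR n) by (apply (lt_INR 0); lia).
  replace ((gam + log2 C / INR n) * INR n) with (log2 C + gam * INR n) by (field; lra).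
  rewrite Rpower_plus. unfold log2, Rpower at 1.
  replace (ln C / ln 2 * ln 2) with (ln C) by (field; pose proof ln2_pos; lra).
  rewrite exp_ln by lra. exact Hu.
Qed.

Lemma rate_bounded n : - (INR d + log2 (2 ^ d * G0)) <= rate n <= INR d + log2 (2 ^ d * G0).
Proof.
  pose proof G0_ge1. pose proof (pos_INR d). pose proof (rate_nonneg n).
  assert (HC : 1 <= 2 ^ d * G0) by (pose proof (pow_R1_Rle 2 d ltac:(lra)); nra).
  assert (Hlog : 0 <= log2 (2 ^ d * G0)).
  { unfold log2, Rdiv. apply Rmult_le_pos; [rewrite <- ln_1; apply ln_le_compat; lra|].
    left. apply Rinv_0_lt_compat, ln2_pos. }
  split; [lra|]. destruct n as [|n].
  - unfold rate. simpl. unfold Rdiv. rewrite Rinv_0. lra.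
  - pose proof (rate_le_of_U_le (INR d) _ (S n) HC ltac:(lia) (U_le_Rpower (S n))).
    enough (log2 (2 ^ d * G0) / INR (S n) <= log2 (2 ^ d * G0)) by lra.
    assert (1 <= INR (S n)) by (apply (le_INR 1); lia).
    unfold Rdiv. rewrite <- (Rmult_1_r (log2 _)) at 2. apply Rmult_le_compat_l; auto.
    rewrite <- Rinv_1. apply Rinv_le_contravar; lra.
Qed.

Lemma limsup_rate_eventually_le eps : 0 < eps ->
  exists N, forall n, (N <= n)%nat -> rate n <= limsup rate + eps.
Proof. apply (limsup_spec rate _ rate_bounded). Qed.

Lemma limsup_rate_frequently_ge eps : 0 < eps ->
  forall N, exists n, (N <= n)%nat /\ limsup rate - eps <= rate n.
Proof. apply (limsup_spec rate _ rate_bounded). Qed.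

Lemma limsup_rate_nonneg : 0 <= limsup rate.
Proof.
  apply Rnot_lt_le. intros Hneg.
  destruct (limsup_rate_eventually_le (- limsup rate / 2)) as [N HN]; [lra|].
  specialize (HN N (le_n N)). pose proof (rate_nonneg N). lra.
Qed.

Lemma limsup_rate_le gam C : 1 <= C -> (forall n, u n <= C * Rpower 2 (gam * INR n)) ->
  limsup rate <= gam.
Proof.
  intros HC Hu. apply Rnot_lt_le. intros Hlt. set (eps := (limsup rate - gam) / 3).
  destruct (div_INR_eventually_le (log2 C) eps) as [N HN]; [unfold eps; lra|].
  destruct (limsup_rate_frequently_ge eps ltac:(unfold eps; lra) (Nat.max N 1)) as (n & Hn & Hge).
  pose proof (rate_le_of_U_le gam C n HC ltac:(lia) (Hu n)).
  specialize (HN n ltac:(lia)). unfold eps in *. lra.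
Qed.

Lemma U_geometric_of_limsup_lt beta : limsup rate < beta ->
  exists C, 1 <= C /\ forall n, u n <= C * Rpower 2 (beta * INR n).
Proof.
  intros Hlt. pose proof limsup_rate_nonneg. pose proof G0_ge1.
  destruct (limsup_rate_eventually_le (beta - limsup rate)) as [N HN]; [lra|].
  set (N1 := Nat.max N 1). exists (2 ^ d * G0 * Rpower 2 (INR d * INR N1)).
  assert (1 <= 2 ^ d) by (apply pow_R1_Rle; lra).
  pose proof (pos_INR d). pose proof (pos_INR N1).
  assert (1 <= Rpower 2 (INR d * INR N1)) by (apply Rpower2_ge1; nra).
  assert (1 <= 2 ^ d * G0) by nra.
  set (C := 2 ^ d * G0 * Rpower 2 (INR d * INR N1)).
  assert (HC : 1 <= C) by (unfold C; nra).
  split; [exact HC|]. intros n. pose proof (pos_INR n).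
  assert (1 <= Rpower 2 (beta * INR n)) by (apply Rpower2_ge1; nra).
  destruct (le_lt_dec N1 n) as [Hn|Hn].
  - assert (u n <= Rpower 2 (beta * INR n)) by (apply rate_le_iff; [lia | specialize (HN n ltac:(lia)); lra]).
    nra.
  - apply Rle_trans with C; [|nra].
    unfold C. apply Rle_trans with (2 ^ d * G0 * Rpower 2 (INR d * INR n)); [apply U_le_Rpower|].
    apply Rmult_le_compat_l; [lra|]. apply Rle_Rpower; [lra|].
    apply Rmult_le_compat_l; [lra | apply le_INR; lia].
Qed.

Definition indicator_V (j : nat) (x : list Z) : R :=
  if excluded_middle_informative (V d j x) then 1 else 0.

Lemma finsum_indicator_V_le j l : NoDup l ->
  finsum (fun x => indicator_V j x * green d mu x) l <= u j.
Proof.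
  intros Hnd. set (inV x := if excluded_middle_informative (V d j x) then true else false).
  replace (finsum (fun x => indicator_V j x * green d mu x) l) with (finsum (green d mu) (filter inV l)).
  - apply (has_sum_ub _ _ _ _ (U_has_sum j)); [apply NoDup_filter; auto|].
    intros x Hx. apply filter_In in Hx. unfold inV in Hx.
    destruct excluded_middle_informative; [auto | destruct Hx; discriminate].
  - rewrite finsum_filter. apply finsum_ext. intros x _.
    unfold indicator_V, inV. destruct excluded_middle_informative; lra.
Qed.

Definition gamma_summand (gam : R) (x : list Z) : R := green d mu x * Rpower (enorm x) (- gam).

Lemma gamma_summand_le_shells gam N x : 0 < gam -> pt d x -> x <> zero d -> V d N x ->
  gamma_summand gam x <=
  psum (fun j => Rpower 2 (gam * (1 - INR j)) * (indicator_V j x * green d mu x)) (S N).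
Proof.
  intros Hgam Hpt Hx0 HV. destruct (V_shell d N x HV) as (k & Hk & Hsh).
  pose proof (green_nonneg d mu Htr x Hpt).
  apply Rle_trans with (Rpower 2 (gam * (1 - INR k)) * (indicator_V k x * green d mu x)).
  - unfold indicator_V. destruct excluded_middle_informative as [_|HnV]; [|destruct Hsh; contradiction].
    unfold gamma_summand. pose proof (Rpower_enorm_shell_le d k x gam Hgam Hx0 Hsh). nra.
  - apply (psum_ge_term (fun j => Rpower 2 (gam * (1 - INR j)) * (indicator_V j x * green d mu x)));
      [|lia].
    intros j _. apply Rmult_le_pos; [left; apply Rpower_pos|]. apply Rmult_le_pos; auto.
    unfold indicator_V. destruct excluded_middle_informative; lra.
Qed.

(* Shell [k] has weight at most [2^(gam (1-k))] and mass at most [u k <= C 2^(beta k)],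
   giving a geometric series of ratio [2^(beta-gam)]. *)
Lemma summable_of_U_geometric gam beta C : 0 < gam -> beta < gam -> 0 <= C ->
  (forall n, u n <= C * Rpower 2 (beta * INR n)) ->
  finite_sum (fun x => pt d x /\ x <> zero d) (gamma_summand gam).
Proof.
  intros Hgam Hbeta HC Hu. pose proof ln2_pos.
  set (w k := Rpower 2 (gam * (1 - INR k))).
  set (q := Rpower 2 (beta - gam)).
  assert (Hq : 0 <= q < 1).
  { split; [left; apply Rpower_pos|]. rewrite <- (Rpower_O 2) by lra. apply Rpower_lt; lra. }
  assert (Hwu : forall k, w k * u k <= Rpower 2 gam * C * q ^ k).
  { intros k. unfold q. rewrite <- Rpower_pow, Rpower_mult by apply Rpower_pos.
    replace (Rpower 2 gam * C * Rpower 2 ((beta - gam) * INR k))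
      with (w k * (C * Rpower 2 (beta * INR k))).
    - apply Rmult_le_compat_l; [left; apply Rpower_pos | apply Hu].
    - unfold w. replace ((beta - gam) * INR k) with (gam * (1 - INR k) + beta * INR k - gam) by ring.
      unfold Rminus at 2. rewrite !Rpower_plus, Rpower_Ropp.
      field. apply Rgt_not_eq, Rpower_pos. }
  destruct (has_sum_exists (fun x => pt d x /\ x <> zero d) (gamma_summand gam)
              (Rpower 2 gam * C * (1 / (1 - q)))) as (s & Hs & _); [|exists s; exact Hs].
  intros l Hnd Hl. destruct (V_cover d l) as [N HN]; [intros x Hx; apply Hl; auto|].
  apply Rle_trans with (finsum (fun x => psum (fun j => w j * (indicator_V j x * green d mu x)) (S N)) l).
  { apply finsum_le. intros x Hx. destruct (Hl x Hx). apply gamma_summand_le_shells; auto. }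
  rewrite finsum_psum. apply Rle_trans with (psum (fun j => Rpower 2 gam * C * q ^ j) (S N)).
  - apply psum_le. intros j _. rewrite finsum_scal. apply Rle_trans with (w j * u j); auto.
    apply Rmult_le_compat_l; [left; apply Rpower_pos | apply finsum_indicator_V_le; auto].
  - rewrite psum_scal. apply Rmult_le_compat_l; [|apply psum_geometric_le; auto].
    pose proof (Rpower_pos 2 gam). nra.
Qed.

Lemma green_le_gamma_summand gam n x : 0 < gam -> pt d x -> x <> zero d -> V d n x ->
  green d mu x <= Rpower ((INR d + 1) * 2 ^ n) gam * gamma_summand gam x.
Proof.
  intros Hgam Hpt Hx0 HV. pose proof (enorm_pos d x Hpt Hx0). pose proof (green_nonneg d mu Htr x Hpt).
  assert (Hle : Rpower (enorm x) gam <= Rpower ((INR d + 1) * 2 ^ n) gam)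
    by (apply Rle_Rpower_l; [lra | split; auto; apply enorm_le_of_V; auto]).
  pose proof (Rpower_pos (enorm x) gam).
  unfold gamma_summand. rewrite Rpower_Ropp.
  replace (Rpower ((INR d + 1) * 2 ^ n) gam * (green d mu x * / Rpower (enorm x) gam))
    with (green d mu x * (Rpower ((INR d + 1) * 2 ^ n) gam / Rpower (enorm x) gam)) by (field; lra).
  rewrite <- (Rmult_1_r (green d mu x)) at 1. apply Rmult_le_compat_l; auto.
  apply Rmult_le_reg_r with (Rpower (enorm x) gam); auto. field_simplify; lra.
Qed.

Lemma U_geometric_of_summable gam : 0 < gam ->
  finite_sum (fun x => pt d x /\ x <> zero d) (gamma_summand gam) ->
  exists C, 1 <= C /\ forall n, u n <= C * Rpower 2 (gam * INR n).
Proof.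
  intros Hgam [s Hs]. pose proof (has_sum_nonneg _ _ _ Hs). pose proof G0_ge1.
  pose proof (pos_INR d). pose proof (Rpower_pos (INR d + 1) gam).
  exists (G0 + s * Rpower (INR d + 1) gam). split; [nra|]. intros n.
  set (K := Rpower ((INR d + 1) * 2 ^ n) gam).
  assert (HK : K = Rpower (INR d + 1) gam * Rpower 2 (gam * INR n)).
  { unfold K. rewrite <- Rpower_mult_distr by (try apply pow_lt; lra).
    rewrite <- (Rpower_pow n 2), Rpower_mult, (Rmult_comm (INR n)) by lra. reflexivity. }
  assert (1 <= Rpower 2 (gam * INR n)) by (apply Rpower2_ge1; pose proof (pos_INR n); nra).
  apply Rle_trans with (G0 + K * s); [|rewrite HK; nra].
  apply (has_sum_le _ _ _ _ (U_has_sum n)). intros l Hnd Hl.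
  set (l' := remove list_Z_eq_dec (zero d) l).
  assert (Hl' : forall x, In x l' -> (pt d x /\ x <> zero d) /\ V d n x).
  { intros x Hx. apply in_remove in Hx. destruct Hx as [Hx Hx0]. specialize (Hl x Hx).
    split; [split; [apply Hl | auto] | auto]. }
  assert (finsum (green d mu) l <= G0 + finsum (green d mu) l').
  { destruct (in_dec list_Z_eq_dec (zero d) l) as [Hin|Hnin].
    - rewrite (finsum_remove list_Z_eq_dec _ l (zero d) Hnd Hin). unfold l', G0. lra.
    - unfold l'. rewrite notin_remove by auto. lra. }
  enough (finsum (green d mu) l' <= K * s) by lra.
  apply Rle_trans with (finsum (fun x => K * gamma_summand gam x) l').
  - apply finsum_le. intros x Hx. destruct (Hl' x Hx) as [[Hpt Hx0] HV].
    apply green_le_gamma_summand; auto.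
  - rewrite finsum_scal. apply Rmult_le_compat_l; [left; apply Rpower_pos|].
    apply (has_sum_ub _ _ _ _ Hs); [apply remove_NoDup; auto|]. intros x Hx. apply Hl' in Hx. tauto.
Qed.

Lemma limsup_rate_le_d : limsup rate <= INR d.
Proof.
  apply (limsup_rate_le _ (2 ^ d * G0)); [|intros n; apply U_le_Rpower].
  pose proof G0_ge1. pose proof (pow_R1_Rle 2 d ltac:(lra)). nra.
Qed.

Lemma gamma_set_of_limsup_lt gam : limsup rate < gam < INR d -> gamma_set d mu gam.
Proof.
  intros [Hlt Hd]. pose proof limsup_rate_nonneg.
  destruct (U_geometric_of_limsup_lt ((limsup rate + gam) / 2)) as (C & HC1 & HC); [lra|].
  split; [lra|]. apply (summable_of_U_geometric gam ((limsup rate + gam) / 2) C); auto; lra.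
Qed.

Lemma limsup_le_of_gamma_set gam : gamma_set d mu gam -> limsup rate <= gam.
Proof.
  intros [[Hgam _] Hsum]. destruct (U_geometric_of_summable gam Hgam Hsum) as (C & HC & Hu).
  exact (limsup_rate_le gam C HC Hu).
Qed.

Lemma gamma_c_eq_limsup_rate : gamma_c d mu = limsup rate.
Proof.
  pose proof limsup_rate_nonneg. pose proof limsup_rate_le_d.
  unfold gamma_c. destruct excluded_middle_informative as [[g Hg]|Hnone].
  - pose proof (limsup_le_of_gamma_set g Hg). destruct Hg as [[_ Hgd] _].
    apply Rinf_eq. split; [apply limsup_le_of_gamma_set|].
    intros b Hb. apply Rnot_lt_le. intros Hlt.
    set (gam := Rmin ((limsup rate + b) / 2) ((limsup rate + INR d) / 2)).
    assert (limsup rate < gam) by (apply Rmin_glb_lt; lra).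
    pose proof (Rmin_l ((limsup rate + b) / 2) ((limsup rate + INR d) / 2)).
    pose proof (Rmin_r ((limsup rate + b) / 2) ((limsup rate + INR d) / 2)).
    enough (b <= gam) by (unfold gam in *; lra).
    apply Hb, gamma_set_of_limsup_lt. unfold gam in *. lra.
  - apply Rle_antisym; auto. apply Rnot_lt_le. intros Hlt. apply Hnone.
    exists ((limsup rate + INR d) / 2). apply gamma_set_of_limsup_lt. lra.
Qed.

End GrowthExponent.

Theorem proposition6p3 (d : nat) (mu : list Z -> R) :
  step_dist d mu -> transient d mu ->
  gamma_c d mu = limsup (fun n => log2 (U d mu (V d n)) / INR n).
Proof. intros Hmu Htr. exact (gamma_c_eq_limsup_rate d mu Hmu Htr). Qed.
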